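(* Let $X,Y$ be continuous processes. Then $\int_0^\cdot X\,d^\circ Y$ exists if and only if the Lévy area $L(X,Y)$ exists, and in that case $2\int_0^tX\,d^\circ Y=X_tY_t-X_0Y_0+L(X,Y)_t$.
   Context: $T>0$; continuous functions are extended by $f(t)=f(0)$ for $t\le0$, $f(t)=f(T)$ for $t>T$. Limits are in the ucp sense: uniformly in $t\in[0,T]$, in probability, as $\varepsilon\to0^+$. The symmetric integral $\int_0^tX\,d^\circ Y$ is the ucp limit of $\int_0^tX(s)\frac{Y(s+\varepsilon)-Y(s-\varepsilon)}{2\varepsilon}ds$, and the Lévy area is $L(X,Y)_t=\lim_{\varepsilon\to0^+}\int_0^t\frac{X_sY_{s+\varepsilon}-X_{s+\varepsilon}Y_s}{\varepsilon}ds$ (ucp limit). *)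

From HB Require Import structures.
From mathcomp Require Import all_boot all_order all_algebra.
From mathcomp Require Import all_classical all_reals all_analysis.
Set Implicit Arguments. Unset Strict Implicit. Unset Printing Implicit Defensive.
Import Order.TTheory GRing.Theory Num.Theory.
Import numFieldNormedType.Exports.
Local Open Scope classical_set_scope.
Local Open Scope ring_scope.

Section Defs.
Context {R : realType} {d : measure_display} {Omega : measurableType d}.

Definition ext (T : R) (f : R -> R) (t : R) : R :=
  f (Num.max 0 (Num.min t T)).

Definition continuous_process (T : R) (X : R -> Omega -> R) : Prop :=
  (forall t, measurable_fun setT (X t)) /\
  (forall w, {within `[0, T], continuous (fun t => X t w)}).

(* ucp convergence as eps -> 0+ of A eps to Z, uniformly in t in [0,T], in
   (outer) probability:  P*( sup_{t in [0,T]} |A eps t - Z t| > delta ) -> 0 *)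
Definition ucp_cvg (P : probability Omega R) (T : R)
    (A : R -> R -> Omega -> R) (Z : R -> Omega -> R) : Prop :=
  forall delta eta : R, 0 < delta -> 0 < eta ->
  exists eps0 : R, 0 < eps0 /\
    forall eps : R, 0 < eps -> eps < eps0 ->
      exists E : set Omega, measurable E /\ (P E <= eta%:E)%E /\
        [set w | exists t, 0 <= t <= T /\ delta < `|A eps t w - Z t w| ] `<=` E.

Definition sym_approx (T : R) (X Y : R -> Omega -> R) (eps t : R) (w : Omega) : R :=
  Rintegral lebesgue_measure `[0, t]
    (fun s => ext T (X ^~ w) s *
       ((ext T (Y ^~ w) (s + eps) - ext T (Y ^~ w) (s - eps)) / (2 * eps))).

Definition levy_approx (T : R) (X Y : R -> Omega -> R) (eps t : R) (w : Omega) : R :=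
  Rintegral lebesgue_measure `[0, t]
    (fun s => (ext T (X ^~ w) s * ext T (Y ^~ w) (s + eps)
               - ext T (X ^~ w) (s + eps) * ext T (Y ^~ w) s) / eps).

End Defs.

From HB Require Import structures.
From mathcomp Require Import all_boot all_order all_algebra.
From mathcomp Require Import all_classical all_reals all_analysis.
From mathcomp Require Import lra ring measurable_realfun.
Import Order.TTheory GRing.Theory Num.Theory.
Import numFieldNormedType.Exports.
Local Open Scope classical_set_scope.
Local Open Scope ring_scope.
Set Implicit Arguments. Unset Strict Implicit. Unset Printing Implicit Defensive.

(* With h(s) = x(s) y(s - eps), the two integrands satisfy
   2 * sym_eps - levy_eps = (h(s + eps) - h(s)) / eps, so by the fundamental theorem
   of calculus and the mean value theorem 2 * sym_eps(t) - levy_eps(t) = h(c) - h(c')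
   for some c in (t, t + eps) and c' in (0, eps).  Uniform continuity of the paths on
   [0, T] then makes 2 * sym_eps - levy_eps converge to X Y - X_0 Y_0 uniformly in t,
   path by path; the exceptional events are contained in measurable events that only
   look at rational times and decrease to the empty set, which gives ucp convergence.
   Since ucp limits are unique up to negligible sets, either approximation converges
   iff the other does, with 2 I = X Y - X_0 Y_0 + L. *)

Section continuous_paths.
Context {R : realType}.
Implicit Types (T s t : R) (f g : R -> R).

Lemma continuous_mul f g : continuous f -> continuous g ->
  continuous (fun s => f s * g s).
Proof. by move=> cf cg s; exact: (continuousM (cf s) (cg s)). Qed.

Lemma continuous_sub f g : continuous f -> continuous g ->
  continuous (fun s => f s - g s).
Proof. by move=> cf cg s; exact: (continuousB (cf s) (cg s)). Qed.

Lemma continuous_addr f c : continuous f -> continuous (fun s => f (s + c)).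
Proof.
move=> cf s; apply: continuous_comp; last exact: cf.
by apply: continuousD; [exact: cvg_id | exact: cvg_cst].
Qed.

Definition clamp T t : R := Num.max 0 (Num.min t T).

Lemma extE T f t : ext T f t = f (clamp T t).
Proof. by []. Qed.

Lemma clamp_itv T t : 0 <= T -> 0 <= clamp T t <= T.
Proof.
move=> T0; rewrite /clamp le_max lexx /= ge_max T0.
by rewrite ge_min lexx orbT.
Qed.

Lemma clamp_id T t : 0 <= t <= T -> clamp T t = t.
Proof. by case/andP=> t0 tT; rewrite /clamp (min_l tT) (max_r t0). Qed.

Lemma dist_clamp_le T s t : 0 <= T -> `|clamp T s - clamp T t| <= `|s - t|.
Proof.
move=> T0; rewrite /clamp.
case: (leP s T) => sT; case: (leP t T) => tT;
case: (leP 0 s) => s0; case: (leP 0 t) => t0;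
rewrite ?(min_l sT) ?(min_r (ltW sT)) ?(min_l tT) ?(min_r (ltW tT));
rewrite ?(max_r s0) ?(max_l (ltW s0)) ?(max_r t0) ?(max_l (ltW t0))
  ?(max_r T0) ?subrr ?normr0 ?normr_ge0 //;
rewrite !ler_norml; have := ler_norm (s - t); have := ler_norm (t - s);
rewrite distrC => ? ?; apply/andP; split; lra.
Qed.

Lemma ext_clamp T f t : 0 <= T -> ext T f (clamp T t) = ext T f t.
Proof. by move=> T0; rewrite extE clamp_id // clamp_itv. Qed.

Lemma ext_continuous T f : 0 <= T -> {within `[0, T], continuous f} ->
  continuous (ext T f).
Proof.
move=> T0 cf t; apply/cvgrPdist_lt => e e0.
have ct : `[0, T]%classic (clamp T t) by rewrite /= in_itv clamp_itv.
have /cvgrPdist_lt/(_ e e0) := (proj1 (@subspace_continuousP _ _ _ f) cf) _ ct.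
rewrite near_withinE => /nbhs_ballP[r r0 near_ct].
near=> s; rewrite !extE.
have cs : `[0, T]%classic (clamp T s) by rewrite /= in_itv clamp_itv.
apply: near_ct cs; rewrite -ball_normE /= distrC.
apply: le_lt_trans (dist_clamp_le _ _ T0) _.
by near: s; apply/nbhs_ballP; exists r => // s; rewrite /ball /= distrC.
Unshelve. all: by end_near. Qed.

Lemma continuous_itv_unif T g : continuous g -> forall e, 0 < e ->
  exists2 r, 0 < r & forall s u, 0 <= s <= T -> 0 <= u <= T ->
    `|s - u| < r -> `|g s - g u| < e.
Proof.
move=> cg e e0; apply: contrapT => no_r.
have /choice[p Hp] : forall n : nat, exists q : R * R, [/\ 0 <= q.1 <= T,
    0 <= q.2 <= T, `|q.1 - q.2| < n.+1%:R^-1 & e <= `|g q.1 - g q.2|].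
  move=> n; apply: contrapT => no_p; apply: no_r.
  exists n.+1%:R^-1 => // s u sT uT su; rewrite ltNge; apply/negP => es.
  by apply: no_p; exists (s, u).
have pT : ((fst \o p) @ \oo) `[0, T]%classic.
  by rewrite /fmap /=; apply: filterE => n; have [] := Hp n; rewrite /= in_itv.
have [l [_ lcluster]] := @segment_compact R 0 T _ _ pT.
have /cvgrPdist_lt/(_ (e / 2)) := cg l; rewrite divr_gt0 //.
move=> /(_ isT) /nbhs_ballP[r /= r0 near_l].
have r20 : 0 < r / 2 by rewrite divr_gt0.
have pr : ((fst \o p) @ \oo) ((fst \o p) @` [set n | n.+1%:R^-1 < r / 2]).
  by apply: filterS (near_infty_natSinv_lt (PosNum r20)) => n nr; exists n.
have [_ [[n nr <-] pl]] := lcluster _ _ pr (nbhsx_ballx l (r / 2) r20).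
move: pl; rewrite -ball_normE /= => pl.
have [_ _ pn ep] := Hp n.
have g1 : `|g l - g (p n).1| < e / 2.
  apply: near_l; rewrite -ball_normE /=; apply: lt_trans pl _.
  by rewrite ltr_pdivrMr // ltr_pMr // ltr1n.
have g2 : `|g l - g (p n).2| < e / 2.
  apply: near_l; rewrite -ball_normE /=.
  apply: le_lt_trans (ler_distD (p n).1 _ _) _.
  by rewrite (splitr r) ltrD // (lt_trans pn nr).
have := ler_distD (g l) (g (p n).1) (g (p n).2).
rewrite [`|g (p n).1 - g l|]distrC => /le_lt_trans/(_ (ltrD g1 g2)).
by rewrite -splitr ltNge ep.
Qed.

Lemma continuous_itv_bounded T g : 0 <= T -> continuous g ->
  exists2 M, 0 <= M & forall s, 0 <= s <= T -> `|g s| <= M.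
Proof.
move=> T0 cg.
have [c _ gc_max] := @EVT_max R (fun s => `|g s|) 0 T T0
  (continuous_subspaceT (fun s => continuous_comp (cg s) (@norm_continuous _ _ _))).
by exists `|g c| => // s sT; apply: gc_max; rewrite in_itv.
Qed.

Lemma rat_itv_approx T (phi : R -> R) s rho : 0 < T -> continuous phi ->
  0 <= s <= T -> 0 < rho ->
  exists q : rat, [/\ 0 <= (ratr q : R) <= T, `|(ratr q : R) - s| < rho
                    & `|phi (ratr q) - phi s| < rho].
Proof.
move=> T0 cphi /andP[s0 sT] rho0.
have /cvgrPdist_lt/(_ rho rho0)/nbhs_ballP[r r0 near_s] := cphi s.
pose r' := Num.min rho r.
have r'0 : 0 < r' by rewrite lt_min rho0 r0.
pose lo := Num.max 0 (s - r'); pose hi := Num.min T (s + r').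
have lohi : lo < hi.
  by rewrite lt_min !gt_max; apply/andP; split; apply/andP; split; lra.
have lohi_ne : `]lo, hi[%classic !=set0.
  by exists ((lo + hi) / 2); rewrite /= in_itv /= !midf_lt.
have [y [+ [q _ qy]]] :=
  dense_rat lohi_ne (@interval_open R (BRight lo) (BLeft hi) isT isT).
rewrite -{}qy /= in_itv /= gt_max lt_min => /andP[/andP[q0 sq] /andP[qT qs]].
have qs_r' : `|ratr q - s| < r' by rewrite ltr_norml; apply/andP; split; lra.
exists q; split.
- by rewrite !ltW.
- by apply: lt_le_trans qs_r' _; rewrite ge_min lexx.
- rewrite distrC; apply: near_s; rewrite /ball /= distrC.
  by apply: lt_le_trans qs_r' _; rewrite ge_min lexx orbT.
Qed.

End continuous_paths.

Section product_jumps.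
Context {R : realType}.
Variables (T : R) (x y : R -> R).

Definition prod_jump (r theta s u v z : R) : Prop :=
  [/\ [/\ 0 <= s <= T, 0 <= u <= T, 0 <= v <= T & 0 <= z <= T],
      `|s - u| < r, `|v - z| < r & theta < `|x s * y v - x u * y z|].

(* Restricting to rational times makes the event measurable in the path; by
   [prod_jump_rat] nothing is lost for continuous paths. *)
Definition rat_prod_jump (r theta : R) : Prop :=
  exists q1 q2 q3 q4 : rat,
    prod_jump r theta (ratr q1) (ratr q2) (ratr q3) (ratr q4).

Lemma rat_prod_jumpW (r r' theta : R) : r <= r' ->
  rat_prod_jump r theta -> rat_prod_jump r' theta.
Proof.
move=> rr' [q1 [q2 [q3 [q4 [qT q12 q34 gap]]]]].
by exists q1, q2, q3, q4; split=> //; apply: lt_le_trans rr'.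
Qed.

Hypotheses (cx : continuous x) (cy : continuous y).

Lemma no_small_prod_jump (theta : R) : 0 <= T -> 0 < theta ->
  exists2 r, 0 < r & forall s u v z, ~ prod_jump r theta s u v z.
Proof.
move=> T0 theta0.
have [Mx Mx0 xMx] := continuous_itv_bounded T0 cx.
have [My My0 yMy] := continuous_itv_bounded T0 cy.
pose M := Mx + My + 1; pose th := theta / (2 * M).
have M0 : 0 < M by rewrite /M; lra.
have th0 : 0 < th by rewrite divr_gt0 // mulr_gt0.
have thM : th * M + M * th = theta by rewrite /th; field; rewrite gt_eqF.
have [rx rx0 x_unif] := continuous_itv_unif T cx th0.
have [ry ry0 y_unif] := continuous_itv_unif T cy th0.
exists (Num.min rx ry) => [|s u v z [[sT uT vT zT]]]; first by rewrite lt_min rx0 ry0.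
rewrite !lt_min => /andP[sux suy] /andP[vzx vzy]; apply/negP; rewrite -leNgt.
have -> : x s * y v - x u * y z = (x s - x u) * y v + x u * (y v - y z) by ring.
apply: le_trans (ler_normD _ _) _; rewrite !normrM -thM.
apply: lerD; apply: ler_pM => //.
- exact/ltW/x_unif.
- by apply: le_trans (yMy _ vT) _; rewrite /M; lra.
- by apply: le_trans (xMx _ uT) _; rewrite /M; lra.
- exact/ltW/y_unif.
Qed.

Lemma prod_jump_rat (r theta s u v z : R) : 0 < T -> 0 < theta ->
  prod_jump r theta s u v z -> rat_prod_jump r (theta / 2).
Proof.
move=> T0 theta0 [[sT uT vT zT] su vz gap].
have [rho rho0 [rho_theta rho_su rho_vz]] : exists2 rho, 0 < rho &
    [/\ rho <= theta / 8, `|s - u| + 2 * rho <= r & `|v - z| + 2 * rho <= r].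
  pose d := Num.max `|s - u| `|v - z|.
  have [sud vzd] : `|s - u| <= d /\ `|v - z| <= d by rewrite !le_max !lexx orbT.
  have dr : d < r by rewrite gt_max su vz.
  exists (Num.min (theta / 8) ((r - d) / 2)).
    by rewrite lt_min !divr_gt0 // subr_gt0.
  have : Num.min (theta / 8) ((r - d) / 2) <= (r - d) / 2 by rewrite ge_min lexx orbT.
  by split; [rewrite ge_min lexx | lra | lra].
have cxc c : continuous (fun a => x a * c).
  by apply: continuous_mul => //; exact: cst_continuous.
have ccy c : continuous (fun b => c * y b).
  by apply: continuous_mul => //; exact: cst_continuous.
have [q1 [q1T q1s e1]] := rat_itv_approx T0 (cxc (y v)) sT rho0.
have [q3 [q3T q3v e3]] := rat_itv_approx T0 (ccy (x (ratr q1))) vT rho0.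
have [q2 [q2T q2u e2]] := rat_itv_approx T0 (cxc (y z)) uT rho0.
have [q4 [q4T q4z e4]] := rat_itv_approx T0 (ccy (x (ratr q2))) zT rho0.
exists q1, q2, q3, q4; split => //.
- have := ler_distD s (ratr q1) (ratr q2); have := ler_distD u s (ratr q2).
  rewrite [`|u - ratr q2|]distrC; lra.
- have := ler_distD v (ratr q3) (ratr q4); have := ler_distD z v (ratr q4).
  rewrite [`|z - ratr q4|]distrC; lra.
move: e1 e2 e3 e4 gap.
set a := x (ratr q1) * y (ratr q3); set a' := x (ratr q2) * y (ratr q4).
set b := x (ratr q1) * y v; set b' := x (ratr q2) * y z.
set c := x s * y v; set c' := x u * y z => e1 e2 e3 e4 gap.
have := ler_distD b c c'; have := ler_distD a b c'; have := ler_distD a' a c'.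
have := ler_distD b' a' c'.
rewrite [`|c - b|]distrC [`|b - a|]distrC; lra.
Qed.

End product_jumps.

Section symmetric_minus_levy.
Context {R : realType}.
Local Notation mu := (@lebesgue_measure R).
Implicit Types (h x y : R -> R) (a b c t eps : R).

Lemma continuous_itv_integrable h a b : continuous h ->
  mu.-integrable `[a, b] (EFin \o h).
Proof.
move=> ch; apply: continuous_compact_integrable; first exact: segment_compact.
exact: continuous_subspaceT.
Qed.

Lemma parameterized_integral_is_derive h a b : continuous h -> a < b ->
  is_derive b 1 (fun u => parameterized_integral mu a u h) (h b).
Proof.
move=> ch ab.
have b1 : b < b + 1 by rewrite ltrDl.
have [dF F'] := @continuous_FTC1_closed R h a b (b + 1) b1
  (continuous_itv_integrable _ _ ch) ab (ch b).
by apply: DeriveDef => //; rewrite -derive1E.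
Qed.

Lemma parameterized_integral_mvt h a b c : continuous h -> a < b -> b < c ->
  exists2 m, b < m < c &
    parameterized_integral mu a c h - parameterized_integral mu a b h = h m * (c - b).
Proof.
move=> ch ab bc.
have dF m : b <= m -> is_derive m 1 (fun u => parameterized_integral mu a u h) (h m).
  by move=> bm; apply: parameterized_integral_is_derive => //; apply: lt_le_trans bm.
have cF : {within `[b, c], continuous (fun u => parameterized_integral mu a u h)}.
  by apply: derivable_within_continuous => m; rewrite in_itv => /andP[/dF[]].
have [|m] := @MVT R _ h b c bc _ cF; first by move=> m; rewrite in_itv => /andP[/ltW/dF].
by rewrite in_itv; exists m.
Qed.

Lemma Rintegral_increment h eps t : continuous h -> 0 < eps -> 0 < t ->
  exists2 c, t < c < t + eps & exists2 c', 0 < c' < eps &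
    \int[mu]_(s in `[0, t]) (h (s + eps) - h s) = eps * (h c - h c').
Proof.
move=> ch e0 t0.
(* The base point -1 puts 0 inside the domain where F is differentiable. *)
pose F u := parameterized_integral mu (-1) u h.
pose K s := F (s + eps) - F s.
have dK (m : R) : -1 < m -> is_derive m 1 K (h (m + eps) - h m).
  move=> m1; have me : -1 < m + eps by rewrite (lt_le_trans m1) // lerDl ltW.
  have := @is_derive1_comp R F (shift eps) m _ _
    (parameterized_integral_is_derive ch me) (is_derive_shift m 1 eps).
  rewrite mulr1 => dFe.
  exact: is_deriveB dFe (parameterized_integral_is_derive ch m1).
have m10 : -1 < (0 : R) by rewrite ltrN10.
have cK (m : R) : -1 < m -> K @ m --> K m.
  by move=> /dK[dKm _]; apply/differentiable_continuous/derivable1_diffP.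
have K_FTC : derivable_oo_LRcontinuous K 0 t.
  split.
  - by move=> m; rewrite in_itv => /andP[m0 _]; have [] := dK m (lt_trans m10 m0).
  - exact/cvg_at_right_filter/cK.
  - exact/cvg_at_left_filter/cK/(lt_trans m10 t0).
have K' : {in `]0, t[, (K^`())%classic =1 (fun s => h (s + eps) - h s)}.
  move=> m; rewrite in_itv => /andP[m0 _].
  by have := dK m (lt_trans m10 m0); rewrite derive1E => ?; rewrite derive_val.
have ch_eps : continuous (fun s => h (s + eps) - h s).
  exact/continuous_sub/ch/continuous_addr.
have := continuous_FTC2 t0 (continuous_subspaceT ch_eps) K_FTC K'.
rewrite /Rintegral => ->; rewrite -EFinB /= /K add0r.
have te : t < t + eps by rewrite ltrDl.
have [c ct ->] := parameterized_integral_mvt ch (lt_trans m10 t0) te.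
have [c' c'e ->] := parameterized_integral_mvt ch m10 e0.
by exists c => //; exists c' => //; ring.
Qed.

Lemma twice_sym_sub_levy_mvt x y eps t : continuous x -> continuous y -> 0 < eps -> 0 < t ->
  exists2 c, t < c < t + eps & exists2 c', 0 < c' < eps &
    2 * \int[mu]_(s in `[0, t]) (x s * ((y (s + eps) - y (s - eps)) / (2 * eps)))
    - \int[mu]_(s in `[0, t]) ((x s * y (s + eps) - x (s + eps) * y s) / eps)
    = x c * y (c - eps) - x c' * y (c' - eps).
Proof.
move=> cx cy e0 t0.
pose h s := x s * y (s - eps).
have ch : continuous h by apply/continuous_mul/continuous_addr.
have [c ct [c' c'e h_incr]] := Rintegral_increment ch e0 t0.
exists c => //; exists c' => //.
have cS : continuous (fun s => x s * ((y (s + eps) - y (s - eps)) / (2 * eps))).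
  apply/continuous_mul/continuous_mul/cst_continuous => //.
  by apply: continuous_sub; apply: continuous_addr.
have cL : continuous (fun s => (x s * y (s + eps) - x (s + eps) * y s) / eps).
  apply/continuous_mul/cst_continuous.
  by apply/continuous_sub; apply/continuous_mul => //; exact/continuous_addr.
rewrite -RintegralZl //; last exact: continuous_itv_integrable.
rewrite -RintegralB //; first last.
- exact: continuous_itv_integrable.
- by apply/continuous_itv_integrable/continuous_mul => //; exact: cst_continuous.
- transitivity (\int[mu]_(s in `[0, t]) ((h (s + eps) - h s) * eps^-1)).
    by apply: eq_Rintegral => s _; rewrite /h addrK; field; rewrite gt_eqF.
  rewrite RintegralZr //.
    by rewrite h_incr /h; field; rewrite gt_eqF.
  exact/continuous_itv_integrable/continuous_sub/ch/continuous_addr.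
Qed.

Lemma sym_levy_prod_jump T x y eps r delta t : 0 < T -> 0 < delta ->
  {within `[0, T], continuous x} -> {within `[0, T], continuous y} ->
  0 < eps -> eps <= r -> 0 <= t <= T ->
  delta < `|2 * \int[mu]_(s in `[0, t])
                  (ext T x s * ((ext T y (s + eps) - ext T y (s - eps)) / (2 * eps)))
            - \int[mu]_(s in `[0, t])
                  ((ext T x s * ext T y (s + eps) - ext T x (s + eps) * ext T y s) / eps)
            - (x t * y t - x 0 * y 0)| ->
  exists s u v z, prod_jump T (ext T x) (ext T y) r (delta / 2) s u v z.
Proof.
move=> T0 delta0 cx cy e0 er tT.
have extT f b : 0 <= b <= T -> f b = ext T f b by move=> bT; rewrite extE clamp_id.
have T0T : (0 : R) <= 0 <= T by rewrite lexx ltW.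
have jump_at a b : 0 <= b <= T -> `|a - b| < r -> `|a - eps - b| < r ->
    delta / 2 < `|ext T x a * ext T y (a - eps) - ext T x b * ext T y b| ->
    exists s u v z, prod_jump T (ext T x) (ext T y) r (delta / 2) s u v z.
  move=> bT ab aeb gap; exists (clamp T a), b, (clamp T (a - eps)), b.
  have near_b a' : `|a' - b| < r -> `|clamp T a' - b| < r.
    by rewrite -{2}(clamp_id bT); apply: le_lt_trans (dist_clamp_le _ _ (ltW T0)).
  split; [split => //; exact: clamp_itv (ltW T0) | exact: near_b | exact: near_b |].
  by rewrite !ext_clamp // ltW.
rewrite (extT x t) // (extT y t) // (extT x 0) // (extT y 0) //.
have [->|tn0] := eqVneq t 0.
  by rewrite set_itv1 !Rintegral_set1 mulr0 !subrr normr0 ltNge ltW.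
have t0 : 0 < t by rewrite lt_neqAle eq_sym tn0; case/andP: tT.
have [c ct [c' c'e ->]] := twice_sym_sub_levy_mvt (ext_continuous (ltW T0) cx)
  (ext_continuous (ltW T0) cy) e0 t0.
have -> : forall a b c d : R, a - b - (c - d) = (a - c) - (b - d) by move=> *; ring.
set A := _ - ext T x t * _; set B := _ - ext T x 0 * _.
move=> gap; have [gapA|gapB] : delta / 2 < `|A| \/ delta / 2 < `|B|.
- case: (ltP (delta / 2) `|A|) => ?; [by left | right].
  by have := ler_normB A B; lra.
- by apply: (jump_at c t) => //; rewrite ltr_norml; case/andP: ct => *; lra.
- by apply: (jump_at c' 0) => //; rewrite ltr_norml; case/andP: c'e => *; lra.
Qed.

End symmetric_minus_levy.

Section ucp_convergence.
Context {R : realType} {d : measure_display} {Omega : measurableType d}.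
Variable P : probability Omega R.
Implicit Types (T : R) (A B C : R -> R -> Omega -> R) (I L Z : R -> Omega -> R).

Lemma ucp_cvg_le_comb T A B C Z1 Z2 Z3 (a b : R) : 0 <= a -> 0 <= b ->
  ucp_cvg P T A Z1 -> ucp_cvg P T B Z2 ->
  (forall eps t w, 0 < eps -> 0 <= t <= T ->
     `|C eps t w - Z3 t w| <= a * `|A eps t w - Z1 t w| + b * `|B eps t w - Z2 t w|) ->
  ucp_cvg P T C Z3.
Proof.
move=> a0 b0 hA hB hC delta eta delta0 eta0.
have frac0 c : 0 <= c -> 0 < delta / (2 * (c + 1)).
  by move=> c0; rewrite divr_gt0 // mulr_gt0 // ltr_wpDl.
have frac_le c e : 0 <= c -> e <= delta / (2 * (c + 1)) -> c * e <= delta / 2.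
  move=> c0 ec; apply: le_trans (ler_wpM2l c0 ec) _.
  have c1 : c + 1 != 0 by rewrite gt_eqF // ltr_wpDl.
  rewrite (_ : c * _ = delta / 2 * (c / (c + 1))); last by field.
  apply: ler_piMr; first by rewrite divr_ge0 // ltW.
  by rewrite ler_pdivrMr ?mul1r ?lerDl // ltr_wpDl.
have eta2 : 0 < eta / 2 by rewrite divr_gt0.
have [e1 [e10 H1]] := hA _ _ (frac0 a a0) eta2.
have [e2 [e20 H2]] := hB _ _ (frac0 b b0) eta2.
exists (Num.min e1 e2); split; first by rewrite lt_min e10 e20.
move=> eps eps0; rewrite lt_min => /andP[ee1 ee2].
have [E1 [mE1 [PE1 sE1]]] := H1 eps eps0 ee1.
have [E2 [mE2 [PE2 sE2]]] := H2 eps eps0 ee2.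
exists (E1 `|` E2); split; first exact: measurableU.
split.
  apply: le_trans (measureU2 _ mE1 mE2) _.
  by rewrite (splitr eta) EFinD; exact: leeD.
move=> w [t [tT gap]]; have := hC eps t w eps0 tT.
case: (ltP (delta / (2 * (a + 1))) `|A eps t w - Z1 t w|) => h1.
  by move=> _; left; apply: sE1; exists t.
case: (ltP (delta / (2 * (b + 1))) `|B eps t w - Z2 t w|) => h2.
  by move=> _; right; apply: sE2; exists t.
move=> /(lt_le_trans gap)/lt_le_trans/(_ (lerD (frac_le _ _ a0 h1) (frac_le _ _ b0 h2))).
by rewrite -splitr ltxx.
Qed.

Lemma negligible_small_cover (mu : {measure set Omega -> \bar R}) (S : set Omega) :
  (forall eta : R, 0 < eta ->
     exists E, measurable E /\ (mu E <= eta%:E)%E /\ S `<=` E) ->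
  mu.-negligible S.
Proof.
move=> cover.
have /choice[E HE] : forall n : nat,
    exists E, measurable E /\ (mu E <= n.+1%:R^-1%:E)%E /\ S `<=` E.
  by move=> n; apply: cover; rewrite invr_gt0 ltr0Sn.
have mE n : measurable (E n) by have [] := HE n.
exists (\bigcap_n E n); split; first exact: bigcapT_measurable.
- apply/eqP; rewrite eq_le measure_ge0 andbT.
  apply/lee_addgt0Pr => e e0; rewrite add0e.
  have [N _ /(_ N (leqnn N)) Ne] := near_infty_natSinv_lt (PosNum e0).
  have [_ [mEN _]] := HE N.
  apply: (@le_trans _ _ (mu (E N))); last by apply: le_trans mEN _; rewrite lee_fin ltW.
  by apply: le_measure; rewrite ?inE //; [exact: bigcapT_measurable | exact: bigcap_inf].
- by move=> w Sw n _; have [_ [_]] := HE n; apply.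
Qed.

Lemma ucp_cvg_unique T A Z1 Z2 : ucp_cvg P T A Z1 -> ucp_cvg P T A Z2 ->
  P.-negligible [set w | exists t, 0 <= t <= T /\ Z1 t w <> Z2 t w].
Proof.
move=> h1 h2.
have hZ : ucp_cvg P T (fun _ t w => Z1 t w) Z2.
  apply: (ucp_cvg_le_comb ler01 ler01 h1 h2) => eps t w _ _.
  by rewrite !mul1r [`|A _ _ _ - Z1 _ _|]distrC; exact: ler_distD.
apply: (@negligibleS _ _ _ _ (\bigcup_k [set w | exists t, 0 <= t <= T /\
   k.+1%:R^-1 < `|Z1 t w - Z2 t w|])).
  move=> w [t [tT ne]].
  have n0 : 0 < `|Z1 t w - Z2 t w| by rewrite normr_gt0 subr_eq0; apply/eqP.
  have [N _ /(_ N (leqnn N)) Nt] := near_infty_natSinv_lt (PosNum n0).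
  by exists N => //; exists t.
apply: negligible_bigcup => k; apply: negligible_small_cover => eta eta0.
have k0 : 0 < k.+1%:R^-1 :> R by rewrite invr_gt0 ltr0Sn.
have [e [e0 He]] := hZ _ _ k0 eta0.
have e2 : 0 < e / 2 by rewrite divr_gt0.
have e2e : e / 2 < e by rewrite ltr_pdivrMr // ltr_pMr // ltr1n.
exact: He e2 e2e.
Qed.

Section twice_minus.
Variables (T : R) (A B : R -> R -> Omega -> R) (G : R -> Omega -> R).
Hypothesis hAB : ucp_cvg P T (fun eps t w => 2 * A eps t w - B eps t w) G.

Lemma ucp_cvg_twice_subl I :
  ucp_cvg P T A I -> ucp_cvg P T B (fun t w => 2 * I t w - G t w).
Proof.
move=> hA; apply: (ucp_cvg_le_comb (a := 2) (b := 1) _ _ hA hAB) => // eps t w _ _.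
rewrite mul1r (_ : B eps t w - _ =
  2 * (A eps t w - I t w) - (2 * A eps t w - B eps t w - G t w)).
  by apply: le_trans (ler_normB _ _) _; rewrite normrM ger0_norm.
by ring.
Qed.

Lemma ucp_cvg_twice_subr L :
  ucp_cvg P T B L -> ucp_cvg P T A (fun t w => (L t w + G t w) / 2).
Proof.
have h2 : (0 : R) <= 2^-1 by rewrite invr_ge0.
move=> hB; apply: (ucp_cvg_le_comb h2 h2 hB hAB) => eps t w _ _.
rewrite (_ : A eps t w - _ =
  2^-1 * (B eps t w - L t w) + 2^-1 * (2 * A eps t w - B eps t w - G t w)).
  by apply: le_trans (ler_normD _ _) _; rewrite !normrM ger0_norm.
by field.
Qed.

End twice_minus.

Lemma measurable_rat_prod_jump T (X Y : R -> Omega -> R) (r theta : R) :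
  (forall t, measurable_fun setT (X t)) -> (forall t, measurable_fun setT (Y t)) ->
  measurable [set w | rat_prod_jump T (X ^~ w) (Y ^~ w) r theta].
Proof.
move=> mX mY.
have -> : [set w | rat_prod_jump T (X ^~ w) (Y ^~ w) r theta] =
    \bigcup_(q1 : rat) \bigcup_(q2 : rat) \bigcup_(q3 : rat) \bigcup_(q4 : rat)
      [set w | prod_jump T (X ^~ w) (Y ^~ w) r theta
                 (ratr q1) (ratr q2) (ratr q3) (ratr q4)].
  apply/seteqP; split => w /=.
    case=> q1 [q2 [q3 [q4 jump]]].
    by exists q1 => //; exists q2 => //; exists q3 => //; exists q4.
  by case=> q1 _ [q2 _ [q3 _ [q4 _ jump]]]; exists q1, q2, q3, q4.
do 4 apply: bigcupT_measurable_rat => ?.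
rewrite /prod_jump; set s := ratr _; set u := ratr _; set v := ratr _; set z := ratr _.
have [K|nK] := pselect ([/\ 0 <= s <= T, 0 <= u <= T, 0 <= v <= T & 0 <= z <= T]
                        /\ `|s - u| < r /\ `|v - z| < r); last first.
  rewrite (_ : [set w | _] = set0) //; apply/seteqP; split => // w /= [].
  by move=> ? ? ? _; apply: nK.
pose gap w := `|X s w * Y v w - X u w * Y z w|.
have mgap : measurable_fun setT gap.
  apply: measurableT_comp; first exact: normr_measurable.
  by apply: measurable_funB; apply: measurable_funM.
rewrite (_ : [set w | _] = gap @^-1` `]theta, +oo[).
  by rewrite -[_ @^-1` _]setTI; apply: mgap => //; exact: measurable_itv.
have [sT [su vz]] := K.
by apply/seteqP; split => w /=; rewrite in_itv /= andbT; [case | split].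
Qed.

Lemma prob_nonincreasing_small (B : (set Omega)^nat) (eta : R) : 0 < eta ->
  (forall n, measurable (B n)) -> nonincreasing_seq B -> \bigcap_n B n = set0 ->
  exists N, (P (B N) <= eta%:E)%E.
Proof.
move=> eta0 mB decB capB.
have := nonincreasing_cvg_mu (le_lt_trans (probability_le1 P (mB 0%N)) (ltry 1))
  mB (bigcapT_measurable mB) decB.
rewrite capB measure0 => /(_ _ (@nbhs_open_ereal_lt R 0 (fun=> eta) eta0))[N _ PN].
by exists N; apply/ltW/(PN N)/leqnn.
Qed.

Lemma ucp_cvg_sym_sub_levy T X Y : 0 < T ->
  continuous_process T X -> continuous_process T Y ->
  ucp_cvg P T (fun eps t w => 2 * sym_approx T X Y eps t w - levy_approx T X Y eps t w)
    (fun t w => X t w * Y t w - X 0 w * Y 0 w).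
Proof.
move=> T0 [mX cX] [mY cY] delta eta delta0 eta0.
have delta4 : 0 < delta / 2 / 2 by rewrite !divr_gt0.
pose jump n := [set w | rat_prod_jump T (ext T (X ^~ w)) (ext T (Y ^~ w))
                                     n.+1%:R^-1 (delta / 2 / 2)].
have mjump n : measurable (jump n).
  exact: (@measurable_rat_prod_jump T (fun t w => ext T (X ^~ w) t)
    (fun t w => ext T (Y ^~ w) t) _ _ (fun t => mX (clamp T t)) (fun t => mY (clamp T t))).
have jump_dec : nonincreasing_seq jump.
  move=> m n mn; apply/subsetPset => w; apply: rat_prod_jumpW.
  by rewrite lef_pV2 ?posrE ?ltr0Sn // ler_nat ltnS.
have jump_cap : \bigcap_n jump n = set0.
  apply/seteqP; split => // w jw.
  have [r r0 no_jump] := no_small_prod_jump (ext_continuous (ltW T0) (cX w))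
    (ext_continuous (ltW T0) (cY w)) (ltW T0) delta4.
  have [N _ /(_ N (leqnn N)) Nr] := near_infty_natSinv_lt (PosNum r0).
  have [q1 [q2 [q3 [q4]]]] := rat_prod_jumpW (ltW Nr) (jw N I).
  exact: no_jump.
have [N PN] := prob_nonincreasing_small eta0 mjump jump_dec jump_cap.
exists N.+1%:R^-1; split => [|eps eps0 epsN]; first by rewrite invr_gt0.
exists (jump N); split => //; split => // w [t [tT gap]].
have [s [u [v [z j]]]] := sym_levy_prod_jump T0 delta0 (cX w) (cY w) eps0 (ltW epsN) tT gap.
have delta2 : 0 < delta / 2 by rewrite divr_gt0.
exact: (prod_jump_rat (ext_continuous (ltW T0) (cX w)) (ext_continuous (ltW T0) (cY w))
  T0 delta2 j).
Qed.

End ucp_convergence.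

Theorem proposition4p8 (R : realType) (d : measure_display) (Omega : measurableType d)
    (P : probability Omega R) (T : R) (hT : 0 < T) (X Y : R -> Omega -> R)
    (hX : continuous_process T X) (hY : continuous_process T Y) :
  ((exists I : R -> Omega -> R, ucp_cvg P T (sym_approx T X Y) I) <->
   (exists L : R -> Omega -> R, ucp_cvg P T (levy_approx T X Y) L)) /\
  (forall I L : R -> Omega -> R,
     ucp_cvg P T (sym_approx T X Y) I ->
     ucp_cvg P T (levy_approx T X Y) L ->
     P.-negligible [set w | exists t, 0 <= t <= T /\
        2 * I t w <> X t w * Y t w - X 0 w * Y 0 w + L t w]).
Proof.
have hD := ucp_cvg_sym_sub_levy P hT hX hY.
split; first split.
- by case=> I /(ucp_cvg_twice_subl hD) hL; eexists; exact: hL.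
- by case=> L /(ucp_cvg_twice_subr hD) hI; eexists; exact: hI.
move=> I L /(ucp_cvg_twice_subl hD) hL' /(ucp_cvg_unique hL').
apply: negligibleS => w [t [tT IL]]; exists t; split => //.
by move=> E; apply: IL; rewrite -E; ring.
Qed.
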